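(* Let $p\in(0,1]$ and let $\bar Q=(\bar q_{j,k})_{j,k\geq1}$ be the generator on $\mathbb N=\{1,2,\dots\}$ with $\bar q_{j,k}=\binom{j-1}{k-1}p^k(1-p)^{j-k}$ for $1\leq k\leq j-1$, $\bar q_{j,j+1}=(j+1)p$, $\bar q_{j,j}=p^j-(2+j)p$, and $\bar q_{j,k}=0$ otherwise. Let $q>0$ satisfy $-1+q+p^q\geq0$. Then the stationary distribution of $\bar Q$, if it exists, does not have a finite $q$th moment. *)

From Stdlib Require Import Reals Lra Arith Bool.
From Coquelicot Require Import Coquelicot.
Open Scope R_scope.

(* Generator Qbar on states 1,2,3,... (states are nats j >= 1; index 0 unused). *)
Definition qbar (p : R) (j k : nat) : R :=
  if (andb (1 <=? k)%nat (k <=? j - 1)%nat) then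
    Binomial.C (j - 1)%nat (k - 1)%nat * p ^ k * (1 - p) ^ (j - k)%nat
  else if (k =? j + 1)%nat then INR (j + 1)%nat * p
  else if (k =? j)%nat then p ^ j - (2 + INR j) * p
  else 0.

Definition stationary (p : R) (pi : nat -> R) : Prop :=
  (forall j, (1 <= j)%nat -> 0 <= pi j) /\
  is_series (fun n => pi (S n)) 1 /\
  (forall k, (1 <= k)%nat -> is_series (fun n => pi (S n) * qbar p (S n) k) 0).

Definition finite_moment (q : R) (pi : nat -> R) : Prop :=
  ex_series (fun n => Rpower (INR (S n)) q * pi (S n)).

From Stdlib Require Import Reals Lra Lia Arith Bool Classical.
From Coquelicot Require Import Coquelicot.
Open Scope R_scope.

(* Test the stationarity equation [pi Qbar = 0] against the bounded function
   [g_N k = min (k ^ q) (N ^ q)].  Below [N], row [j] of [Qbar] only reaches states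
   [<= j + 1 <= N], so [(Qbar g_N) j = (Qbar f) j] with [f k = k ^ q].  This drift is
   strictly positive: by convexity of the exponential, the binomial jumps down
   from [j] contribute at least [p (j p) ^ q], and [-1 + q + p ^ q >= 0] is
   what makes [p (j p) ^ q + p ((j + 1) ^ (q + 1) - (j + 2) j ^ q) > 0].  At or above [N],
   [(Qbar g_N) j >= - j ^ q].  Hence
   [0 = sum_j pi_j (Qbar g_N) j >= pi_j0 (Qbar f) j0 - sum_(j >= N) pi_j j ^ q],
   which fails for large [N] if the [q]-th moment is finite. *)

Lemma sum_n_m_le_loc (a b : nat -> R) (m n : nat) :
  (forall k, (m <= k <= n)%nat -> a k <= b k) -> sum_n_m a m n <= sum_n_m b m n.
Proof.
  intros Hab.
  rewrite (sum_n_m_ext_loc a (fun k => Rmin (a k) (b k)))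
    by (intros k Hk; symmetry; apply Rmin_left, Hab, Hk).
  apply sum_n_m_le; intros k; apply Rmin_r.
Qed.

Lemma sum_n_m_nonneg (a : nat -> R) (m n : nat) :
  (forall k, 0 <= a k) -> 0 <= sum_n_m a m n.
Proof.
  intros Ha. apply (Rle_trans _ (sum_n_m (fun _ => 0) m n)).
  - rewrite sum_n_m_const. lra.
  - apply sum_n_m_le, Ha.
Qed.

Lemma sum_n_m_le_extend (a : nat -> R) (m n n' : nat) :
  (forall k, 0 <= a k) -> (m <= S n)%nat -> (n <= n')%nat ->
  sum_n_m a m n <= sum_n_m a m n'.
Proof.
  intros Ha Hm Hn. rewrite (sum_n_m_Chasles a m n n') by assumption.
  pose proof (sum_n_m_nonneg a (S n) n' Ha). unfold plus; simpl. lra.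
Qed.

Lemma term_le_sum_n (a : nat -> R) (m n : nat) :
  (forall k, 0 <= a k) -> (m <= n)%nat -> a m <= sum_n a n.
Proof.
  intros Ha Hmn. induction n as [|n IH].
  - replace m with 0%nat by lia. rewrite sum_O. lra.
  - rewrite sum_Sn. unfold plus; simpl. destruct (Nat.eq_dec m (S n)) as [->|Hne].
    + pose proof (sum_n_m_nonneg a 0 n Ha). unfold sum_n. lra.
    + pose proof (Ha (S n)). assert (a m <= sum_n a n) by (apply IH; lia). lra.
Qed.

Lemma sum_n_m_lincomb (alpha beta : R) (u v : nat -> R) (m n : nat) :
  sum_n_m (fun k => alpha * u k + beta * v k) m n
  = alpha * sum_n_m u m n + beta * sum_n_m v m n :> R.
Proof.
  rewrite (sum_n_m_plus (fun k => mult alpha (u k)) (fun k => mult beta (v k))).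
  now rewrite !sum_n_m_mult_l.
Qed.

Lemma is_series_zero : is_series (fun _ : nat => 0) 0.
Proof.
  apply (filterlim_ext (fun _ => 0)); [intros n; rewrite sum_n_const; ring|].
  apply filterlim_const.
Qed.

Lemma is_series_le (a b : nat -> R) (la lb : R) :
  (forall n, a n <= b n) -> is_series a la -> is_series b lb -> la <= lb.
Proof.
  intros Hab Ha Hb.
  apply (is_lim_seq_le (sum_n a) (sum_n b) la lb); [|exact Ha|exact Hb].
  intros n. apply sum_n_m_le, Hab.
Qed.

Lemma is_series_tail (a : nat -> R) (l : R) (n : nat) :
  is_series a l -> is_series (fun k => a (S n + k)%nat) (l - sum_n a n).
Proof.
  intros Ha. apply is_series_incr_n; [lia|].
  unfold plus; simpl. replace l with (l - sum_n a n + sum_n a n) in Ha at 1 by ring.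
  exact Ha.
Qed.

Lemma sum_n_le_series_tail (s a : nat -> R) (la : R) (K : nat) :
  is_series s 0 -> is_series a la -> (forall n, (K < n)%nat -> - a n <= s n) ->
  sum_n s K <= la - sum_n a K.
Proof.
  intros Hs Ha Hsa.
  assert (- (la - sum_n a K) <= 0 - sum_n s K).
  { apply (is_series_le (fun k => - a (S K + k)%nat) (fun k => s (S K + k)%nat)).
    - intros k. apply Hsa. lia.
    - apply (is_series_opp (fun k => a (S K + k)%nat)), is_series_tail, Ha.
    - apply is_series_tail, Hs. }
  lra.
Qed.

Lemma is_series_sum_n_m (u : nat -> nat -> R) (l : nat -> R) (m n : nat) :
  (forall k, (m <= k <= n)%nat -> is_series (fun j => u j k) (l k)) ->
  is_series (fun j => sum_n_m (u j) m n) (sum_n_m l m n).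
Proof.
  destruct (le_lt_dec m n) as [Hmn|Hnm].
  - induction Hmn as [|n Hmn IH]; intros Hu.
    + rewrite sum_n_n. apply (is_series_ext (fun j => u j m)).
      * intros j. now rewrite sum_n_n.
      * apply Hu. lia.
    + rewrite sum_n_Sm by lia.
      apply (is_series_ext (fun j => plus (sum_n_m (u j) m n) (u j (S n)))).
      * intros j. now rewrite sum_n_Sm by lia.
      * apply (is_series_plus (fun j => sum_n_m (u j) m n) (fun j => u j (S n))).
        -- apply IH. intros k Hk. apply Hu. lia.
        -- apply Hu. lia.
  - intros _. rewrite sum_n_m_zero by exact Hnm.
    apply (is_series_ext (fun _ => 0)); [intros j; now rewrite sum_n_m_zero|].
    apply is_series_zero.
Qed.

Lemma is_series_nonzero_term (a : nat -> R) (l : R) :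
  is_series a l -> l <> 0 -> exists n, a n <> 0.
Proof.
  intros Ha Hl. apply NNPP. intros Hzero. apply Hl.
  rewrite <- (is_series_unique a l Ha). apply is_series_unique.
  apply (is_series_ext (fun _ => 0)); [|apply is_series_zero].
  intros n. apply NNPP. intros Hn. apply Hzero. exists n. auto.
Qed.

Lemma is_series_sum_n_near (a : nat -> R) (l eps : R) (m : nat) :
  is_series a l -> 0 < eps -> exists n, (m <= n)%nat /\ Rabs (sum_n a n - l) < eps.
Proof.
  intros Ha Heps. apply is_series_Reals in Ha. destruct (Ha eps Heps) as [n0 Hn0].
  exists (n0 + m)%nat. split; [lia|]. rewrite sum_n_Reals. apply Hn0. lia.
Qed.

Lemma ln_ge_1_minus_inv (t : R) : 0 < t -> 1 - / t <= ln t.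
Proof.
  intros Ht. pose proof (exp_ineq1_le (- ln t)) as H.
  rewrite exp_Ropp, exp_ln in H by exact Ht. lra.
Qed.

Lemma ln_gt_1_minus_inv (t : R) : 1 < t -> 1 - / t < ln t.
Proof.
  intros Ht. assert (Hln : 0 < ln t) by (rewrite <- ln_1; apply ln_increasing; lra).
  pose proof (exp_ineq1 (- ln t) ltac:(lra)) as H.
  rewrite exp_Ropp, exp_ln in H by lra. lra.
Qed.

Lemma Rpower_scale (c x q : R) : 0 < c -> 0 < x -> Rpower x q = Rpower c q * Rpower (x / c) q.
Proof.
  intros Hc Hx. rewrite Rpower_mult_distr by (try apply Rdiv_lt_0_compat; assumption).
  f_equal. field. lra.
Qed.

Lemma Rpower_tangent_le (q c x : R) :
  0 <= q -> 0 < c -> 0 < x -> Rpower c q * (1 + q - q * c / x) <= Rpower x q.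
Proof.
  intros Hq Hc Hx. rewrite (Rpower_scale c x q) by assumption.
  apply Rmult_le_compat_l; [left; apply exp_pos|]. unfold Rpower.
  pose proof (ln_ge_1_minus_inv (x / c) ltac:(apply Rdiv_lt_0_compat; lra)) as Hln.
  pose proof (exp_ineq1_le (q * ln (x / c))).
  assert (q * (1 - / (x / c)) <= q * ln (x / c)) by (apply Rmult_le_compat_l; lra).
  replace (/ (x / c)) with (c / x) in * by (field; lra).
  unfold Rdiv in *. lra.
Qed.

Lemma Rpower_tangent_lt (q c x : R) :
  0 < q -> 0 < c -> c < x -> Rpower c q * (1 + q - q * c / x) < Rpower x q.
Proof.
  intros Hq Hc Hcx. rewrite (Rpower_scale c x q) by lra.
  apply Rmult_lt_compat_l; [apply exp_pos|]. unfold Rpower.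
  assert (Ht : 1 < x / c) by (apply (Rmult_lt_reg_r c); [lra|]; field_simplify; lra).
  pose proof (ln_gt_1_minus_inv (x / c) Ht) as Hln.
  pose proof (exp_ineq1_le (q * ln (x / c))).
  assert (q * (1 - / (x / c)) < q * ln (x / c)) by (apply Rmult_lt_compat_l; lra).
  replace (/ (x / c)) with (c / x) in * by (field; lra).
  unfold Rdiv in *. lra.
Qed.

Lemma moment_increment_pos (p q x : R) :
  0 < p -> 0 < q -> 0 <= -1 + q + Rpower p q -> 0 < x ->
  0 < Rpower (x * p) q + (x + 1) * Rpower (x + 1) q - (x + 2) * Rpower x q.
Proof.
  intros Hp Hq Hpq Hx.
  rewrite <- Rpower_mult_distr by assumption.
  pose proof (Rpower_tangent_lt q x (x + 1) Hq Hx ltac:(lra)) as Htan.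
  assert (Hxq : 0 < Rpower x q) by apply exp_pos.
  assert (Rpower x q * (1 - q) <= Rpower x q * Rpower p q) by (apply Rmult_le_compat_l; lra).
  assert ((x + 1) * (Rpower x q * (1 + q - q * x / (x + 1))) < (x + 1) * Rpower (x + 1) q)
    by (apply Rmult_lt_compat_l; lra).
  replace ((x + 1) * (Rpower x q * (1 + q - q * x / (x + 1)))) with (Rpower x q * (x + 1 + q))
    in * by (field; lra).
  lra.
Qed.

Lemma sum_n_m_1_Reals (a : nat -> R) (n : nat) :
  sum_n_m a 1 (S n) = sum_f_R0 (fun i => a (S i)) n.
Proof. rewrite <- sum_n_m_S. apply sum_n_Reals. Qed.

Lemma binomial_C_nonneg (n k : nat) : 0 <= Binomial.C n k.
Proof.
  unfold Binomial.C. apply Rmult_le_pos; [apply pos_INR|].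
  left. apply Rinv_0_lt_compat, Rmult_lt_0_compat; apply INR_fact_lt_0.
Qed.

Lemma binomial_C_div_succ (n i : nat) :
  (i <= n)%nat -> Binomial.C n i / INR (S i) = Binomial.C (S n) (S i) / INR (S n).
Proof.
  intros Hin. unfold Binomial.C. replace (S n - S i)%nat with (n - i)%nat by lia.
  change (fact (S n)) with (S n * fact n)%nat.
  change (fact (S i)) with (S i * fact i)%nat.
  rewrite !mult_INR.
  pose proof (INR_fact_neq_0 n). pose proof (INR_fact_neq_0 i). pose proof (INR_fact_neq_0 (n - i)).
  field. repeat split; auto; apply not_0_INR; lia.
Qed.

(* [binom_weight p j k] is [p] times the probability that [1 + Binomial(j - 1, p)]
   equals [k]. *)
Definition binom_weight (p : R) (j k : nat) : R :=
  Binomial.C (j - 1) (k - 1) * p ^ k * (1 - p) ^ (j - k).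

Section BinomialWeights.

Variable p : R.
Hypotheses (hp0 : 0 < p) (hp1 : p <= 1).

Lemma binom_weight_nonneg (j k : nat) : 0 <= binom_weight p j k.
Proof.
  unfold binom_weight.
  apply Rmult_le_pos; [apply Rmult_le_pos|]; [apply binomial_C_nonneg| |]; apply pow_le; lra.
Qed.

Lemma binom_weight_succ (n i : nat) :
  binom_weight p (S n) (S i) = Binomial.C n i * p ^ i * (1 - p) ^ (n - i) * p.
Proof. unfold binom_weight. simpl. rewrite !Nat.sub_0_r. ring. Qed.

Lemma binom_weight_diag (n : nat) : binom_weight p (S n) (S n) = p ^ S n.
Proof. rewrite binom_weight_succ, C_n_n, Nat.sub_diag. simpl. ring. Qed.

Lemma sum_binom_weight (n : nat) : sum_n_m (binom_weight p (S n)) 1 (S n) = p :> R.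
Proof.
  rewrite sum_n_m_1_Reals.
  rewrite (sum_eq _ (fun i => Binomial.C n i * p ^ i * (1 - p) ^ (n - i) * p))
    by (intros i _; rewrite binom_weight_succ; ring).
  rewrite <- scal_sum, <- binomial. replace (p + (1 - p)) with 1 by ring. rewrite pow1. ring.
Qed.

Lemma sum_binom_weight_div (n : nat) :
  sum_n_m (fun k => binom_weight p (S n) k / INR k) 1 (S n) <= / INR (S n).
Proof.
  (* [C n i / (i + 1) = C (n + 1) (i + 1) / (n + 1)] turns the sum into
     [(1 - (1 - p) ^ (n + 1)) / (n + 1)]. *)
  rewrite sum_n_m_1_Reals.
  rewrite (sum_eq _ (fun i => Binomial.C (S n) (S i) * p ^ S i * (1 - p) ^ (S n - S i) * / INR (S n))).
  2:{ intros i Hi. unfold binom_weight. simpl (S n - 1)%nat. simpl (S i - 1)%nat. rewrite !Nat.sub_0_r.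
      transitivity (Binomial.C n i / INR (S i) * p ^ S i * (1 - p) ^ (S n - S i)); [unfold Rdiv; ring|].
      rewrite binomial_C_div_succ by lia. unfold Rdiv. ring. }
  rewrite <- scal_sum.
  assert (Hbin := binomial p (1 - p) (S n)).
  replace (p + (1 - p)) with 1 in Hbin by ring. rewrite pow1, decomp_sum in Hbin by lia.
  simpl pred in Hbin.
  assert (0 <= Binomial.C (S n) 0 * p ^ 0 * (1 - p) ^ (S n - 0)).
  { apply Rmult_le_pos; [apply Rmult_le_pos|]; [apply binomial_C_nonneg| |]; apply pow_le; lra. }
  assert (0 < / INR (S n)) by (apply Rinv_0_lt_compat, lt_0_INR; lia).
  rewrite <- (Rmult_1_r (/ INR (S n))) at 2. apply Rmult_le_compat_l; lra.
Qed.

Lemma sum_binom_weight_Rpower (q : R) (n : nat) : 0 <= q ->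
  p * Rpower (INR (S n) * p) q <=
  sum_n_m (fun k => binom_weight p (S n) k * Rpower (INR k) q) 1 (S n).
Proof.
  (* Tangent bound [k ^ q >= c ^ q (1 + q - q c / k)] at [c = (n + 1) p]; summed against
     the weights, the [1 / k] term costs at most [c ^ q q p]. *)
  intros Hq. set (c := INR (S n) * p). set (A := Rpower c q).
  assert (Hc : 0 < c) by (apply Rmult_lt_0_compat; [apply lt_0_INR; lia | exact hp0]).
  assert (HA : 0 < A) by apply exp_pos.
  apply Rle_trans with
    (sum_n_m (fun k => A * (1 + q) * binom_weight p (S n) k
                       + - (A * q * c) * (binom_weight p (S n) k / INR k)) 1 (S n)).
  - rewrite (sum_n_m_lincomb (A * (1 + q)) (- (A * q * c))
               (binom_weight p (S n)) (fun k => binom_weight p (S n) k / INR k)).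
    rewrite sum_binom_weight.
    assert (HAqc : 0 <= A * q * c) by (apply Rmult_le_pos; [apply Rmult_le_pos|]; lra).
    pose proof (Rmult_le_compat_l _ _ _ HAqc (sum_binom_weight_div n)).
    replace (A * q * c * / INR (S n)) with (A * q * p) in * by (unfold c; field; apply not_0_INR; lia).
    lra.
  - apply sum_n_m_le_loc. intros k Hk.
    pose proof (Rpower_tangent_le q c (INR k) Hq Hc ltac:(apply lt_0_INR; lia)).
    pose proof (binom_weight_nonneg (S n) k).
    apply Rle_trans with (binom_weight p (S n) k * (A * (1 + q - q * c / INR k))).
    + right. unfold Rdiv. ring.
    + apply Rmult_le_compat_l; assumption.
Qed.

End BinomialWeights.

Section Generator.

Variable p : R.

Lemma qbar_lower (j k : nat) : (1 <= k <= j - 1)%nat -> qbar p j k = binom_weight p j k.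
Proof.
  intros [Hk1 Hkj]. unfold qbar.
  apply Nat.leb_le in Hk1. apply Nat.leb_le in Hkj. now rewrite Hk1, Hkj.
Qed.

Lemma qbar_diag (j : nat) : qbar p j j = p ^ j - (2 + INR j) * p.
Proof.
  unfold qbar.
  replace (andb (1 <=? j) (j <=? j - 1))%nat with false
    by (destruct j; [reflexivity|]; symmetry; apply andb_false_intro2, Nat.leb_gt; lia).
  replace (j =? j + 1)%nat with false by (symmetry; apply Nat.eqb_neq; lia).
  now rewrite Nat.eqb_refl.
Qed.

Lemma qbar_succ (j : nat) : qbar p j (S j) = INR (S j) * p.
Proof.
  unfold qbar.
  replace (andb (1 <=? S j) (S j <=? j - 1))%nat with false
    by (symmetry; apply andb_false_intro2, Nat.leb_gt; lia).
  rewrite <- Nat.add_1_r, Nat.eqb_refl. reflexivity.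
Qed.

Lemma qbar_far (j k : nat) : (S j < k)%nat -> qbar p j k = 0.
Proof.
  intros Hk. unfold qbar.
  replace (andb (1 <=? k) (k <=? j - 1))%nat with false
    by (symmetry; apply andb_false_intro2, Nat.leb_gt; lia).
  replace (k =? j + 1)%nat with false by (symmetry; apply Nat.eqb_neq; lia).
  replace (k =? j)%nat with false by (symmetry; apply Nat.eqb_neq; lia).
  reflexivity.
Qed.

Lemma sum_qbar_far (j N : nat) (g : nat -> R) : (S j <= N)%nat ->
  sum_n_m (fun k => qbar p j k * g k) 1 N = sum_n_m (fun k => qbar p j k * g k) 1 (S j).
Proof.
  intros HN. induction HN as [|N HN IH]; [reflexivity|].
  rewrite sum_n_Sm, IH, qbar_far by lia. unfold plus; simpl. ring.
Qed.

Lemma sum_qbar_row (n : nat) (g : nat -> R) :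
  sum_n_m (fun k => qbar p (S n) k * g k) 1 (S (S n))
  = sum_n_m (fun k => binom_weight p (S n) k * g k) 1 (S n)
    + p * (INR (S (S n)) * g (S (S n)) - (2 + INR (S n)) * g (S n)) :> R.
Proof.
  rewrite !sum_n_Sm by lia.
  rewrite (sum_n_m_ext_loc _ (fun k => binom_weight p (S n) k * g k) 1 n)
    by (intros k Hk; rewrite qbar_lower by lia; reflexivity).
  rewrite qbar_diag, qbar_succ, binom_weight_diag.
  unfold plus; simpl. ring.
Qed.

Lemma qbar_row_sum (n : nat) : sum_n_m (qbar p (S n)) 1 (S (S n)) = 0 :> R.
Proof.
  rewrite (sum_n_m_ext _ (fun k => qbar p (S n) k * 1)) by (intros; symmetry; apply Rmult_1_r).
  rewrite sum_qbar_row.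
  rewrite (sum_n_m_ext _ (binom_weight p (S n))) by (intros; apply Rmult_1_r).
  rewrite sum_binom_weight, !S_INR. ring.
Qed.

End Generator.

(* [(Qbar f) j] for [f k = k ^ q]: row [j] of [qbar] vanishes beyond [S j]. *)
Definition moment_drift (p q : R) (j : nat) : R :=
  sum_n_m (fun k => qbar p j k * Rpower (INR k) q) 1 (S j).

(* [(Qbar g) j] for the bounded test function [g k = min (k ^ q) (N ^ q)],
   using that the rows of [qbar] sum to zero. *)
Definition capped_drift (p q : R) (N j : nat) : R :=
  sum_n_m (fun k => qbar p j k * (Rpower (INR k) q - Rpower (INR N) q)) 1 N.

Lemma capped_drift_stationary (p q : R) (pi : nat -> R) (N : nat) :
  stationary p pi -> is_series (fun n => pi (S n) * capped_drift p q N (S n)) 0.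
Proof.
  intros [_ [_ Hstat]].
  set (u := fun n k => pi (S n) * qbar p (S n) k * (Rpower (INR k) q - Rpower (INR N) q)).
  assert (Hu : is_series (fun n => sum_n_m (u n) 1 N) (sum_n_m (fun _ => 0) 1 N)).
  { apply is_series_sum_n_m. intros k Hk.
    rewrite <- (Rmult_0_l (Rpower (INR k) q - Rpower (INR N) q)).
    apply is_series_scal_r, Hstat. lia. }
  rewrite sum_n_m_const, Rmult_0_r in Hu.
  revert Hu. apply is_series_ext. intros n. unfold capped_drift.
  rewrite <- (sum_n_m_mult_l (K := R_Ring)). apply sum_n_m_ext. intros k.
  unfold u, mult; simpl. ring.
Qed.

Section Drift.

Variables p q : R.
Hypotheses (hp0 : 0 < p) (hp1 : p <= 1) (hq : 0 < q) (hpq : 0 <= -1 + q + Rpower p q).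

Lemma moment_drift_pos (n : nat) : 0 < moment_drift p q (S n).
Proof.
  unfold moment_drift. rewrite sum_qbar_row.
  pose proof (sum_binom_weight_Rpower p hp0 hp1 q n (Rlt_le _ _ hq)).
  pose proof (moment_increment_pos p q (INR (S n)) hp0 hq hpq (lt_0_INR _ (Nat.lt_0_succ n))).
  rewrite (S_INR (S n)).
  assert (0 < p * (Rpower (INR (S n) * p) q + (INR (S n) + 1) * Rpower (INR (S n) + 1) q
                   - (INR (S n) + 2) * Rpower (INR (S n)) q)) by (apply Rmult_lt_0_compat; assumption).
  lra.
Qed.

Lemma capped_drift_below (n N : nat) :
  (S (S n) <= N)%nat -> capped_drift p q N (S n) = moment_drift p q (S n).
Proof.
  intros HN. unfold capped_drift, moment_drift. rewrite sum_qbar_far by exact HN.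
  rewrite (sum_n_m_ext _ (fun k => 1 * (qbar p (S n) k * Rpower (INR k) q)
                                   + - Rpower (INR N) q * qbar p (S n) k))
    by (intros k; simpl; ring).
  rewrite sum_n_m_lincomb, qbar_row_sum. ring.
Qed.

Lemma capped_drift_above (n N : nat) :
  (1 <= N <= S n)%nat -> - Rpower (INR (S n)) q <= capped_drift p q N (S n).
Proof.
  intros HN. unfold capped_drift.
  assert (HfN : 0 < Rpower (INR N) q) by apply exp_pos.
  assert (Hmono : Rpower (INR N) q <= Rpower (INR (S n)) q).
  { apply Rle_Rpower_l; [lra|]. split; [apply lt_0_INR; lia | apply le_INR; lia]. }
  apply Rle_trans with (sum_n_m (fun k => - Rpower (INR N) q * binom_weight p (S n) k) 1 N).
  - rewrite (sum_n_m_mult_l (K := R_Ring) (- Rpower (INR N) q) (binom_weight p (S n))).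
    pose proof (sum_n_m_le_extend (binom_weight p (S n)) 1 N (S n)
                  (binom_weight_nonneg p hp0 hp1 (S n)) ltac:(lia) ltac:(lia)) as Hext.
    rewrite sum_binom_weight in Hext.
    change (- Rpower (INR (S n)) q
            <= - Rpower (INR N) q * sum_n_m (binom_weight p (S n)) 1 N).
    nra.
  - apply sum_n_m_le_loc. intros k Hk.
    pose proof (binom_weight_nonneg p hp0 hp1 (S n) k).
    destruct (Nat.eq_dec k (S n)) as [->|Hkn].
    + assert (N = S n) by lia. subst N. rewrite Rminus_diag, Rmult_0_r. nra.
    + rewrite qbar_lower by lia.
      assert (0 < Rpower (INR k) q) by apply exp_pos. nra.
Qed.

End Drift.

Theorem proposition9 (p q : R) (hp0 : 0 < p) (hp1 : p <= 1) (hq : 0 < q)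
  (hpq : 0 <= -1 + q + Rpower p q) (pi : nat -> R) :
  stationary p pi -> ~ finite_moment q pi.
Proof.
  intros Hstat [L Hmom]. pose proof Hstat as [Hpi_nonneg [Hpi_sum _]].
  set (a := fun n => Rpower (INR (S n)) q * pi (S n)) in Hmom.
  set (b := fun n => pi (S n) * moment_drift p q (S n)).
  assert (Hb : forall n, 0 <= b n).
  { intros n. apply Rmult_le_pos; [apply Hpi_nonneg; lia|].
    left. apply moment_drift_pos; assumption. }
  assert (Hb0 : exists n0, 0 < b n0).
  { destruct (is_series_nonzero_term _ _ Hpi_sum R1_neq_R0) as [n0 Hn0].
    exists n0. pose proof (Hpi_nonneg (S n0) ltac:(lia)).
    apply Rmult_lt_0_compat; [lra|]. apply moment_drift_pos; assumption. }
  destruct Hb0 as [n0 Hn0].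
  destruct (is_series_sum_n_near a L (b n0) n0 Hmom Hn0) as [K [HK HaK]].
  set (s := fun n => pi (S n) * capped_drift p q (S (S K)) (S n)).
  assert (Hhead : sum_n s K = sum_n b K).
  { apply sum_n_ext_loc. intros n Hn. unfold s, b. now rewrite capped_drift_below by lia. }
  assert (Htail : sum_n s K <= L - sum_n a K).
  { apply sum_n_le_series_tail; [apply capped_drift_stationary, Hstat | exact Hmom |].
    intros n Hn. unfold a, s. pose proof (Hpi_nonneg (S n) ltac:(lia)).
    pose proof (capped_drift_above p q hp0 hp1 hq n (S (S K)) ltac:(lia)). nra. }
  pose proof (term_le_sum_n b n0 K Hb HK).
  apply Rabs_def2 in HaK. lra.
Qed.
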